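(* For every $i\in\mathbb{N}$, the family $\{\mathrm{bit}_i:\mathbb{Z}_n\to\{-1,1\}\}_{n>2^i}$ is concentrated.
   Context: $\mathbb{Z}_n=\{0,\dots,n-1\}$ with addition mod $n$. For $x\in\mathbb{Z}_n$ write its binary expansion $x=\sum_{j\ge0}x_j2^j$ with $x_j\in\{0,1\}$; then $\mathrm{bit}_i(x)=(-1)^{x_i}$. For $f:\mathbb{Z}_n\to\mathbb{C}$: $\langle f,g\rangle=\frac1n\sum_x f(x)\overline{g(x)}$, $\|f\|_2^2=\langle f,f\rangle$, $\chi_\alpha(x)=\exp(2\pi i\alpha x/n)$, $\widehat f(\alpha)=\langle f,\chi_\alpha\rangle$, and $f|_\Gamma=\sum_{\alpha\in\Gamma}\widehat f(\alpha)\chi_\alpha$ for $\Gamma\subseteq\mathbb{Z}_n$. A family of functions $f_n:\mathbb{Z}_{n}\to\mathbb{C}$ (indexed by $n$) is concentrated if there is a bivariate polynomial $P\in\mathbb{R}[x,y]$ such that for every index $n$ and every $\epsilon>0$ there is $\Gamma_n\subseteq\mathbb{Z}_{n}$ with $|\Gamma_n|\le P(\log(n),1/\epsilon)$ and $\|f_n-f_n|_{\Gamma_n}\|_2^2<\epsilon$. *)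

From HB Require Import structures.
From mathcomp Require Import all_boot all_order all_algebra.
From mathcomp Require Import polyXY.
From mathcomp Require Import all_classical all_reals.
From mathcomp Require Import exp trigo.
From mathcomp Require Import complex.
Set Implicit Arguments. Unset Strict Implicit. Unset Printing Implicit Defensive.
Import Order.TTheory GRing.Theory Num.Theory.
Local Open Scope ring_scope.

Section Fourier.
Variable R : realType.
Local Notation C := R[i].

Definition bit (n i : nat) (x : 'I_n) : C :=
  if odd ((x : nat) %/ 2 ^ i) then -1 else 1.

Definition inner (n : nat) (f g : 'I_n -> C) : C :=
  (n%:R)^-1 * \sum_(x : 'I_n) f x * conjc (g x).

Definition l2normsq (n : nat) (f : 'I_n -> C) : C := inner f f.

Definition chi (n : nat) (alpha : 'I_n) (x : 'I_n) : C :=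
  let t := (2 * pi * (alpha : nat)%:R * (x : nat)%:R / n%:R : R) in
  (cos t +i* sin t)%C.

Definition fourier (n : nat) (f : 'I_n -> C) (alpha : 'I_n) : C :=
  inner f (chi alpha).

Definition frestrict (n : nat) (f : 'I_n -> C) (G : {set 'I_n}) : 'I_n -> C :=
  fun x => \sum_(alpha in G) fourier f alpha * chi alpha x.

End Fourier.

From HB Require Import structures.
From mathcomp Require Import all_boot all_order all_algebra.
From mathcomp Require Import polyXY.
From mathcomp Require Import all_classical all_reals.
From mathcomp Require Import exp trigo.
From mathcomp Require Import complex.
From mathcomp Require Import ring lra zify.
Set Implicit Arguments.
Unset Strict Implicit.
Unset Printing Implicit Defensive.
Import Order.TTheory GRing.Theory Num.Theory.
Local Open Scope ring_scope.

(* Put M = 2^(i+1), the period of bit_i, and d(c) = min(c, n - c), the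
   distance from c to 0 in Z_n.  With w = exp(-2 pi i a / n), the sum
   S = n * \hat{bit_i}(a) = sum_(y < n) bit_i(y) w^y satisfies
   (w^M - 1) S = (a block of M terms) - (another block of M terms), hence
   |S| |w^M - 1| <= 2M, and |w^M - 1| >= d(aM mod n) / n gives
   |\hat{bit_i}(a)| <= 2M / d(aM mod n).  Let Gamma be the set of a with
   d(aM mod n) <= K.  Since a |-> aM mod n is at most M-to-1 and each value of
   d is taken at most twice, |Gamma| <= 2M(K+1), while by Parseval the
   discarded mass is at most (2M)^2 * 2M * sum_(j > K) 1/j^2 <= (2M)^3 / K.
   Taking K > (2M)^3 / eps bounds |Gamma| by 4M + (2M)^4 / eps, uniformly in n. *)

Section NormedSums.
Variable R : numDomainType.

Lemma sum_expr_eq0 (z : R) m : z != 1 -> z ^+ m = 1 -> \sum_(x < m) z ^+ x = 0.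
Proof.
move=> z_neq1 zm; have /esym/eqP := subrX1 z m.
by rewrite zm subrr mulf_eq0 subr_eq0 (negbTE z_neq1) => /eqP.
Qed.

Lemma norm_exprn_sub1_le (z : R) k :
  `|z| = 1 -> `|z ^+ k - 1| <= k%:R * `|z - 1|.
Proof.
move=> z1; rewrite subrX1 normrM mulrC ler_wpM2r //.
apply: le_trans (ler_norm_sum _ _ _) _.
under eq_bigr do rewrite normrX z1 expr1n.
by rewrite sumr_const card_ord.
Qed.

Lemma norm_periodic_sum_le (f : nat -> R) (M m : nat) (w : R) :
  (forall y, f (y + M)%N = f y) -> (forall y, `|f y| <= 1) -> `|w| = 1 ->
  `|(w ^+ M - 1) * \sum_(0 <= y < m) f y * w ^+ y| <= (M.*2)%:R.
Proof.
move=> f_per f_le1 w1; pose g y := f y * w ^+ y.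
have block k : `|\sum_(k <= y < k + M) g y| <= M%:R.
  apply: le_trans (ler_norm_sum _ _ _) _.
  have -> : M%:R = \sum_(k <= y < k + M) (1 : R) by rewrite sumr_const_nat addKn.
  by apply: ler_sum_nat => y _; rewrite normrM normrX w1 expr1n mulr1.
have shift : w ^+ M * \sum_(0 <= y < m) g y = \sum_(M <= y < m + M) g y.
  rewrite -{2}[M]add0n big_addn addnK mulr_sumr.
  by apply: eq_bigr => y _; rewrite /g f_per exprD mulrCA [w ^+ M * _]mulrC.
have split_m : \sum_(0 <= y < m + M) g y =
    \sum_(0 <= y < m) g y + \sum_(m <= y < m + M) g y by rewrite -big_cat_nat ?leq_addr.
have split_M : \sum_(0 <= y < m + M) g y =
    \sum_(0 <= y < M) g y + \sum_(M <= y < m + M) g y by rewrite -big_cat_nat ?leq_addl.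
have -> : (w ^+ M - 1) * \sum_(0 <= y < m) g y =
    \sum_(m <= y < m + M) g y - \sum_(0 <= y < M) g y.
  apply/eqP; rewrite mulrBl shift mul1r subr_eq addrAC.
  by rewrite [_ + \sum_(0 <= y < m) g y]addrC -split_m split_M addrAC subrr add0r.
by apply: le_trans (ler_normB _ _) _; rewrite -addnn natrD lerD ?block.
Qed.

End NormedSums.

Section Expi.
Variable R : realType.
Local Notation C := R[i].

Definition expi (t : R) : C := (cos t +i* sin t)%C.

Lemma expi0 : expi 0 = 1.
Proof. by rewrite /expi cos0 sin0. Qed.

Lemma expiD a b : expi (a + b) = expi a * expi b.
Proof. by rewrite /expi cosD sinD; simpc; congr (_ +i* _)%C; ring. Qed.

Lemma conj_expi t : (expi t)^*%C = expi (- t).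
Proof. by rewrite /expi cosN sinN. Qed.

Lemma expiMn t k : expi (t *+ k) = expi t ^+ k.
Proof. by elim: k => [|k IH]; rewrite ?expi0 // mulrS exprS expiD IH. Qed.

Lemma expi_2pi_nat k : expi (2 * pi * k%:R) = 1.
Proof.
by rewrite mulr_natr expiMn mulr_natl /expi cos2pi sin2pi expr1n.
Qed.

Lemma norm_expi t : `|expi t| = 1.
Proof.
have : `|expi t| ^+ 2 = 1 ^+ 2 by rewrite sqr_normc conj_expi -expiD subrr expi0 expr1n.
by move/eqP; rewrite eqrXn2 ?ler01 // => /eqP.
Qed.

Lemma sqr_norm_expi_sub1 t : `|expi t - 1| ^+ 2 = (2 - 2 * cos t)%:C%C.
Proof.
rewrite -add_Re2_Im2 /expi /=; congr (_ +i* _)%C.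
by have := cos2Dsin2 t; lra.
Qed.

Lemma norm_expiN_sub1 t : `|expi (- t) - 1| = `|expi t - 1|.
Proof. by apply/eqP; rewrite -(eqrXn2 (ltn0Sn 1)) // !sqr_norm_expi_sub1 cosN. Qed.

End Expi.

Definition cdist (n c : nat) : nat := minn c (n - c).

Section ExpiLowerBound.
Variable R : realType.
Local Notation C := R[i].
Local Notation expi := (@expi R).

Lemma cos_le0 (t : R) : pi / 2 <= t <= pi + pi / 2 -> cos t <= 0.
Proof.
move=> /andP[t_ge t_le]; rewrite -[t](subrK pi) cosDpi oppr_le0.
by apply: cos_ge0_pihalf; apply/andP; split; lra.
Qed.

(* With k the least integer such that 4ck > n, the angle 2 pi c k / n lies in
   [pi/2, 3pi/2], so 1 <= |z^k - 1| <= k |z - 1| for z = expi (2 pi c / n). *)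
Lemma norm_expi_sub1_ge (n c : nat) : (0 < c)%N -> (c.*2 <= n)%N ->
  c%:R / n%:R <= `|expi (2 * pi * c%:R / n%:R) - 1|.
Proof.
move=> c_gt0 c2_le; have n_gt0 : (0 < n)%N by lia.
set z := expi _; set k := (n %/ (4 * c)).+1.
have k_gt : (n < k * (4 * c))%N by apply: ltn_ceil; lia.
have k_le : (k * (4 * c) <= 3 * n)%N.
  by have := leq_divM n (4 * c); rewrite /k mulSn; lia.
have zk : z ^+ k = expi (2 * pi * (k%:R * c%:R / n%:R)).
  by rewrite -expiMn -mulr_natr; congr expi; field; rewrite pnatr_eq0 -lt0n.
have cos_zk : cos (2 * pi * (k%:R * c%:R / n%:R)) <= 0 :> R.
  have lo : n%:R < k%:R * (4 * c%:R) :> R by rewrite -!natrM ltr_nat.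
  have hi : k%:R * (4 * c%:R) <= 3 * n%:R :> R by rewrite -!natrM ler_nat.
  have nR_gt0 : (0 : R) < n%:R by rewrite ltr0n.
  apply: cos_le0.
  have u_ge : 1 / 4 <= k%:R * c%:R / n%:R :> R by rewrite ler_pdivlMr //; lra.
  have u_le : k%:R * c%:R / n%:R <= 3 / 4 :> R by rewrite ler_pdivrMr //; lra.
  have pi0 := pi_gt0 R; set u := k%:R * c%:R / n%:R in u_ge u_le *.
  have : 0 <= pi * (u - 1 / 4) by rewrite mulr_ge0 ?subr_ge0 // ltW.
  have : 0 <= pi * (3 / 4 - u) by rewrite mulr_ge0 ?subr_ge0 // ltW.
  by move=> *; apply/andP; split; lra.
have one_le : 1 <= `|z ^+ k - 1|.
  rewrite -ler_sqr ?nnegrE // expr1n zk sqr_norm_expi_sub1.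
  by rewrite -[1]/(1%:C%C) lecR; lra.
have := le_trans one_le (norm_exprn_sub1_le k (norm_expi _)).
have [nC_gt0 kC_gt0] : (0 : C) < n%:R /\ (0 : C) < k%:R by rewrite !ltr0n.
rewrite -ler_pdivrMl // => /(le_trans _); apply.
by rewrite mulr1 ler_pdivrMr // mulrC ler_pdivlMr // -natrM ler_nat; lia.
Qed.

Lemma expi_2pi_mod (n m : nat) : (0 < n)%N ->
  expi (2 * pi * m%:R / n%:R) = expi (2 * pi * (m %% n)%N%:R / n%:R).
Proof.
move=> n_gt0; rewrite {1}(divn_eq m n) natrD natrM mulrDr mulrDl expiD.
by rewrite -mulrA mulfK ?pnatr_eq0 -?lt0n // expi_2pi_nat mul1r.
Qed.

Lemma cdist_le_norm_expi_sub1 (n m : nat) : (0 < n)%N ->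
  (cdist n (m %% n)%N)%:R / n%:R <= `|expi (2 * pi * m%:R / n%:R) - 1|.
Proof.
move=> n_gt0; rewrite expi_2pi_mod //.
have := ltn_pmod m n_gt0; set c := (m %% n)%N => c_lt.
have [->|c_gt0] := posnP c; first by rewrite /cdist min0n mul0r.
have [c2_le|c2_gt] := leqP c.*2 n.
  by rewrite /cdist (minn_idPl _) ?norm_expi_sub1_ge //; lia.
rewrite /cdist (minn_idPr _); last by lia.
have -> : expi (2 * pi * c%:R / n%:R) = expi (- (2 * pi * (n - c)%:R / n%:R)).
  rewrite natrB ?(ltnW c_lt) // -[RHS]mulr1 -(expi_2pi_nat _ 1) -expiD.
  by congr expi; field; rewrite pnatr_eq0 -lt0n.
by rewrite norm_expiN_sub1 norm_expi_sub1_ge //; lia.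
Qed.

Lemma norm_expi_2pi_sub1_gt0 (n m : nat) : (0 < m < n)%N ->
  0 < `|expi (2 * pi * m%:R / n%:R) - 1 : C|.
Proof.
move=> /andP[m_gt0 m_lt]; have n_gt0 : (0 < n)%N by lia.
apply: lt_le_trans (cdist_le_norm_expi_sub1 m n_gt0).
by rewrite modn_small // divr_gt0 // ltr0n /cdist; lia.
Qed.
End ExpiLowerBound.

Section Fourier.
Variables (R : realType) (n : nat).
Local Notation C := R[i].
Local Notation chi := (@chi R n).
Local Notation expi := (@expi R).
Implicit Types (f : 'I_n -> C) (a b x : 'I_n).

Lemma chiE a x : chi a x = expi (2 * pi * a%:R * x%:R / n%:R).
Proof. by []. Qed.

Lemma chiC a x : chi a x = chi x a.
Proof. by rewrite !chiE; congr expi; ring. Qed.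

Lemma sum_chi_mulJ a b :
  \sum_x chi a x * (chi b x)^*%C = if a == b then n%:R else 0.
Proof.
have n_gt0 : (0 < n)%N by case: n a => [[]|].
have nR_neq0 : n%:R != 0 :> R by rewrite pnatr_eq0 -lt0n.
pose z := expi (2 * pi * (a%:R - b%:R) / n%:R).
have chi_mulJ x : chi a x * (chi b x)^*%C = z ^+ x.
  by rewrite !chiE conj_expi -expiD -expiMn; congr expi; rewrite -mulr_natr; field.
under eq_bigr do rewrite chi_mulJ.
have [eq_ab|neq_ab] := eqVneq a b.
  rewrite /z eq_ab subrr mulr0 mul0r expi0.
  by under eq_bigr do rewrite expr1n; rewrite sumr_const card_ord.
apply: sum_expr_eq0.
  rewrite -subr_eq0 -normr_gt0 /z.
  have [a_lt b_lt] := (ltn_ord a, ltn_ord b).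
  case: (ltngtP a b) => [lt_ab|lt_ba|/val_inj eq_ab]; last by rewrite eq_ab eqxx in neq_ab.
    rewrite -[a%:R - b%:R]opprB -natrB ?(ltnW lt_ab) // mulrN mulNr norm_expiN_sub1.
    by rewrite norm_expi_2pi_sub1_gt0 //; lia.
  by rewrite -natrB ?(ltnW lt_ba) // norm_expi_2pi_sub1_gt0 //; lia.
have -> : z ^+ n = expi (2 * pi * a%:R) * (expi (2 * pi * b%:R))^*%C.
  by rewrite conj_expi -expiD -expiMn; congr expi; rewrite -mulr_natr; field.
by rewrite !expi_2pi_nat conjc1 mulr1.
Qed.

Lemma fourierE f a : n%:R * fourier f a = \sum_x f x * (chi a x)^*%C.
Proof.
have n_gt0 : (0 < n)%N by case: n a => [[]|].
by rewrite /fourier /inner mulrA divff ?mul1r // pnatr_eq0 -lt0n.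
Qed.

Lemma fourier_inversion f x : \sum_a fourier f a * chi a x = f x.
Proof.
have n_gt0 : (0 < n)%N by case: n x => [[]|].
have -> : \sum_a fourier f a * chi a x =
    n%:R^-1 * \sum_y f y * \sum_a chi x a * (chi y a)^*%C.
  rewrite mulr_sumr; under [RHS]eq_bigr do rewrite !mulr_sumr.
  rewrite exchange_big /=; apply: eq_bigr => a _.
  rewrite /fourier /inner -mulrA mulr_suml mulr_sumr; apply: eq_bigr => y _.
  by rewrite -mulrA [(chi a y)^*%C * _]mulrC (chiC a x) (chiC a y).
under eq_bigr do rewrite sum_chi_mulJ.
rewrite (bigD1 x) //= eqxx big1 ?addr0 => [|y /negbTE]; last first.
  by rewrite eq_sym => ->; rewrite mulr0.
by rewrite mulrCA mulVf ?mulr1 // pnatr_eq0 -lt0n.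
Qed.

Lemma sub_frestrict f G x : f x - frestrict f G x = frestrict f (~: G) x.
Proof.
rewrite -{1}(fourier_inversion f x) (bigID (mem G)) /= addrC addrK.
by apply: eq_bigl => a; rewrite !inE.
Qed.

Lemma eq_l2normsq f g : f =1 g -> l2normsq f = l2normsq g.
Proof. by move=> fg; rewrite /l2normsq /inner; under eq_bigr do rewrite fg. Qed.

Lemma l2normsq_frestrict f S :
  l2normsq (frestrict f S) = \sum_(a in S) `|fourier f a| ^+ 2.
Proof.
have [n0|n_gt0] := posnP n.
  rewrite big1 => [|a _]; last by have := ltn_ord a; rewrite [X in (_ < X)%N]n0.
  by rewrite /l2normsq /inner [X in X%:R]n0 invr0 mul0r.
rewrite /l2normsq /inner /frestrict.
transitivity (n%:R^-1 * \sum_(a in S) \sum_(b in S)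
    fourier f a * (fourier f b)^*%C * \sum_x chi a x * (chi b x)^*%C).
  congr (_ * _); under eq_bigr do rewrite rmorph_sum mulr_suml.
  under eq_bigr do under eq_bigr do rewrite mulr_sumr.
  rewrite exchange_big /=; apply: eq_bigr => a _.
  rewrite exchange_big /=; apply: eq_bigr => b _.
  by rewrite mulr_sumr; apply: eq_bigr => x _; rewrite rmorphM /=; ring.
rewrite mulr_sumr; apply: eq_bigr => a aS.
under eq_bigr do rewrite sum_chi_mulJ.
rewrite (bigD1 a) // big1 => [|b /andP[_ /negbTE]]; last by rewrite eq_sym => ->; rewrite mulr0.
by rewrite eqxx /= addr0 sqr_normc mulrCA mulVf ?mulr1 // pnatr_eq0 -lt0n.
Qed.

End Fourier.

Lemma norm_fourier_periodic_le (R : realType) n M (f : nat -> R[i]) (a : 'I_n) :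
    (forall y, f (y + M)%N = f y) -> (forall y, `|f y| <= 1) ->
  `|fourier (fun x : 'I_n => f x) a| * (cdist n (a * M %% n)%N)%:R <= (M.*2)%:R.
Proof.
move=> f_per f_le1.
have n_gt0 : (0 < n)%N by case: n a => [[]|].
have nR_neq0 : n%:R != 0 :> R by rewrite pnatr_eq0 -lt0n.
pose w : R[i] := expi (- (2 * pi * a%:R / n%:R)).
have sumE : n%:R * fourier (fun x : 'I_n => f x) a = \sum_(0 <= y < n) f y * w ^+ y.
  rewrite fourierE big_mkord; apply: eq_bigr => x _.
  by rewrite chiE conj_expi -expiMn; congr (_ * expi _); rewrite -mulr_natr; field.
have wM_ge : (cdist n (a * M %% n)%N)%:R / n%:R <= `|w ^+ M - 1|.
  have -> : w ^+ M = expi (- (2 * pi * (a * M)%N%:R / n%:R)).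
    by rewrite -expiMn; congr expi; rewrite natrM -mulr_natr; field.
  by rewrite norm_expiN_sub1 cdist_le_norm_expi_sub1.
have := norm_periodic_sum_le n f_per f_le1 (norm_expi (- (2 * pi * a%:R / n%:R))).
rewrite -/w -sumE normrM normrM normr_nat; apply: le_trans.
have -> : `|w ^+ M - 1| * (n%:R * `|fourier (fun x : 'I_n => f x) a|) =
    `|fourier (fun x : 'I_n => f x) a| * (`|w ^+ M - 1| * n%:R) by ring.
by rewrite ler_wpM2l // -ler_pdivrMr ?ltr0n.
Qed.

Section Counting.
Variable R : numFieldType.
Implicit Types (h : nat -> R) (n m M K : nat).

Lemma ler_sum_inj (I J : finType) (g : I -> J) (F : J -> R) :
  injective g -> (forall j, 0 <= F j) -> \sum_i F (g i) <= \sum_j F j.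
Proof.
move=> g_inj F_ge0; rewrite [X in _ <= X](bigID (mem (g @: finset.setT))) /=.
have -> : \sum_i F (g i) = \sum_(j in g @: finset.setT) F j.
  by rewrite big_imset /=; [apply: eq_bigl => i; rewrite inE | move=> i j _ _ /g_inj].
by rewrite lerDl sumr_ge0.
Qed.

(* a |-> (a M div n, a M mod n) is injective, so each residue is hit at most M times. *)
Lemma sum_mulmod_le n M h : (0 < M)%N -> (forall j, 0 <= h j) ->
  \sum_(a < n) h (a * M %% n)%N <= M%:R * \sum_(c < n) h c.
Proof.
move=> M_gt0 h_ge0; case: n => [|n]; first by rewrite !big_ord0 mulr0.
have q_lt (a : 'I_n.+1) : (a * M %/ n.+1 < M)%N by rewrite ltn_divLR // mulnC ltn_pmul2l.
pose g (a : 'I_n.+1) := (Ordinal (q_lt a), Ordinal (ltn_pmod (a * M) (ltn0Sn n))).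
have g_inj : injective g.
  move=> a b [q_ab r_ab]; apply: val_inj; apply/eqP.
  by rewrite -(eqn_pmul2r M_gt0) (divn_eq (a * M) n.+1) (divn_eq (b * M) n.+1) q_ab r_ab.
apply: le_trans (ler_sum_inj (F := fun p : 'I_M * 'I_n.+1 => h p.2) g_inj (fun p => h_ge0 _)) _.
by rewrite -(pair_bigA _ (fun (_ : 'I_M) (c : 'I_n.+1) => h c)) /= sumr_const card_ord mulr_natl.
Qed.

Lemma sum_cdist_le n h : (forall j, 0 <= h j) ->
  \sum_(c < n) h (cdist n c) <= (\sum_(j < n.+1) h j) *+ 2.
Proof.
move=> h_ge0; have sum_le : \sum_(c < n) h c <= \sum_(j < n.+1) h j.
  by rewrite big_ord_recr /= lerDl.
have sum_rev_le : \sum_(c < n) h (n - c)%N <= \sum_(j < n.+1) h j.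
  rewrite (reindex_inj rev_ord_inj) big_ord_recl -[X in X <= _]add0r lerD //.
  by apply: ler_sum => j _; rewrite /= subKn // /bump add1n.
rewrite mulr2n; apply: le_trans (lerD sum_le sum_rev_le); rewrite -big_split.
by apply: ler_sum => c _; rewrite /cdist /=; case: leqP; rewrite ?lerDl ?lerDr.
Qed.

Lemma sum_cdist_mulmod_le n M h : (0 < M)%N -> (forall j, 0 <= h j) ->
  \sum_(a < n) h (cdist n (a * M %% n)) <= (M.*2)%:R * \sum_(j < n.+1) h j.
Proof.
move=> M_gt0 h_ge0; have := sum_mulmod_le n (h := fun c => h (cdist n c)) M_gt0 (fun c => h_ge0 _).
move/le_trans; apply; rewrite -addnn natrD mulrDl -mulr2n -mulrnAr.
by rewrite ler_wpM2l // sum_cdist_le.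
Qed.

Lemma sum_indicator_le m K : \sum_(j < m) (j <= K)%N%:R <= K.+1%:R :> R.
Proof.
rewrite -natr_sum ler_nat; suff -> : (\sum_(j < m) (j <= K) = minn m K.+1)%N by rewrite geq_minr.
elim: m => [|m IH]; first by rewrite big_ord0.
by rewrite big_ord_recr /= IH; case: leqP; lia.
Qed.

(* Telescoping against 1/j - 1/(j+1) = 1/(j(j+1)) >= 1/(j+1)^2. *)
Lemma sum_tail_inv_sqr_le m K : (0 < K)%N ->
  \sum_(j < m) (K < j)%N%:R / j%:R ^+ 2 <= K%:R^-1 :> R.
Proof.
move=> K_gt0.
have step j : (0 < j)%N -> (j.+1%:R ^+ 2)^-1 + j.+1%:R^-1 <= j%:R^-1 :> R.
  move=> j_gt0; have -> : j%:R^-1 = (j * j.+1)%:R^-1 + j.+1%:R^-1 :> R.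
    by rewrite natrM -natr1; field; rewrite natr1 !pnatr_eq0 -!lt0n j_gt0.
  rewrite lerD2r -natrX lef_pV2 ?posrE ?ltr0n ?muln_gt0 ?expn_gt0 ?j_gt0 //.
  by rewrite ler_nat; nia.
suff tail m' : \sum_(j < m'.+1) (K < j)%N%:R / j%:R ^+ 2 + (maxn K m')%:R^-1 <= K%:R^-1 :> R.
  case: m => [|m]; first by rewrite big_ord0 invr_ge0 ler0n.
  by apply: le_trans (tail m); rewrite lerDl invr_ge0 ler0n.
elim: m' => [|j IH]; first by rewrite big_ord1 /= mul0r add0r maxn0.
rewrite big_ord_recr /=; case: (ltnP K j.+1) => [K_lt|K_ge] /=.
  rewrite mulr1n mul1r -addrA; apply: le_trans IH.
  by rewrite (maxn_idPr (K_lt : (K <= j)%N)) lerD2l step //; lia.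
by rewrite mulr0n mul0r addr0; rewrite (maxn_idPl (ltnW K_ge)) in IH.
Qed.

End Counting.

Definition lowfreq (n M K : nat) : {set 'I_n} :=
  [set a : 'I_n | (cdist n (a * M %% n) <= K)%N].

Lemma card_lowfreq_le (R : numFieldType) n M K : (0 < M)%N ->
  #|lowfreq n M K|%:R <= (M.*2 * K.+1)%:R :> R.
Proof.
move=> M_gt0.
have -> : #|lowfreq n M K|%:R = \sum_(a < n) (cdist n (a * M %% n) <= K)%N%:R :> R.
  rewrite -sum1_card natr_sum big_mkcond /=.
  by apply: eq_bigr => a _; rewrite /lowfreq inE; case: ifP.
apply: le_trans (sum_cdist_mulmod_le n (h := fun j => (j <= K)%N%:R) M_gt0 (fun j => ler0n _ _)) _.
by rewrite natrM ler_wpM2l // sum_indicator_le.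
Qed.

Lemma l2normsq_sub_lowfreq_le (R : realType) n M K (f : nat -> R[i]) :
    (0 < M)%N -> (0 < K)%N ->
    (forall y, f (y + M)%N = f y) -> (forall y, `|f y| <= 1) ->
  l2normsq (fun x : 'I_n => f x - frestrict (fun x : 'I_n => f x) (lowfreq n M K) x)
    <= (M.*2)%:R ^+ 3 / K%:R.
Proof.
move=> M_gt0 K_gt0 f_per f_le1.
rewrite (eq_l2normsq (sub_frestrict _ _)) l2normsq_frestrict.
pose h j : R[i] := (K < j)%N%:R / j%:R ^+ 2.
apply: le_trans (_ : _ <= \sum_(a < n) (M.*2)%:R ^+ 2 * h (cdist n (a * M %% n))) _.
  rewrite big_mkcond; apply: ler_sum => a _; rewrite /lowfreq !inE -ltnNge /h.
  case: ltnP => [K_lt|_]; last by rewrite mul0r mulr0.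
  rewrite mul1r -expr_div_n ler_sqr ?nnegrE ?divr_ge0 // ler_pdivlMr ?ltr0n; last by lia.
  exact: norm_fourier_periodic_le.
rewrite -mulr_sumr [(M.*2)%:R ^+ 3]exprSr -mulrA ler_wpM2l ?exprn_ge0 //.
have h_ge0 j : 0 <= h j by rewrite /h divr_ge0 ?exprn_ge0.
apply: le_trans (sum_cdist_mulmod_le n M_gt0 h_ge0) _.
by rewrite ler_wpM2l // sum_tail_inv_sqr_le.
Qed.

Theorem corollary6p5 (R : realType) (i : nat) :
  exists P : {poly {poly R}},
    forall n : nat, (2 ^ i < n)%N ->
    forall eps : R, 0 < eps ->
    exists G : {set 'I_n},
      (#|G|%:R <= P.[ln (n%:R), eps^-1]) /\
      l2normsq (fun x => @bit R n i x - frestrict (@bit R n i) G x) < eps%:C%C.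
Proof.
(* The bound obtained does not depend on n. *)
pose M := (2 ^ i.+1)%N; have M_gt0 : (0 < M)%N by rewrite expn_gt0.
exists ((M.*2.*2)%:R%:P + ((M.*2) ^ 4)%:R *: 'X)%:P => n _ eps eps_gt0.
pose x := (M.*2)%:R ^+ 3 / eps; have x_ge0 : 0 <= x by rewrite /x divr_ge0 ?exprn_ge0 // ltW.
pose K := (Num.truncn x).+1; have /andP[K_le K_gt] := truncn_itv x_ge0.
exists (lowfreq n M K); split.
  rewrite hornerC hornerD hornerC hornerZ hornerX.
  apply: le_trans (card_lowfreq_le _ _ _ M_gt0) _.
  have -> : (M.*2.*2)%:R + ((M.*2) ^ 4)%:R * eps^-1 = (M.*2)%:R * (x + 2).
    by rewrite /x -[M.*2.*2]muln2 !natrM; ring.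
  by rewrite natrM ler_wpM2l // /K -addn2 natrD lerD2r.
pose f y : R[i] := if odd (y %/ 2 ^ i) then -1 else 1.
have f_per y : f (y + M)%N = f y by rewrite /f /M expnS addnC divnMDl ?expn_gt0 // oddD.
have f_le1 y : `|f y| <= 1 by rewrite /f; case: ifP; rewrite ?normrN normr1.
apply: le_lt_trans (l2normsq_sub_lowfreq_le n M_gt0 (ltn0Sn _) f_per f_le1) _.
have : (M.*2)%:R ^+ 3 / K%:R < eps :> R by rewrite ltr_pdivrMr ?ltr0n // mulrC -ltr_pdivrMr.
by rewrite -ltcR fmorph_div rmorphXn !rmorph_nat.
Qed.
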